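(* Let $\mathcal{M}\subseteq\mathbb{S}^n$ with $|\mathcal{M}|=2$. Then $\mathcal{S}(\mathcal{M})$ is rank-one generated if and only if $\mathcal{T}(\mathcal{M})$ is rank-one generated.
   Context: $\mathbb{S}^n$ denotes real symmetric $n\times n$ matrices with $\langle A,B\rangle=\mathrm{tr}(AB)$, $\mathbb{S}^n_+$ the PSD cone. For $\mathcal{M}\subseteq\mathbb{S}^n$, $\mathcal{S}(\mathcal{M})=\{X\in\mathbb{S}^n_+:\langle M,X\rangle\ge0\ \forall M\in\mathcal{M}\}$ and $\mathcal{T}(\mathcal{M})=\{X\in\mathbb{S}^n_+:\langle M,X\rangle=0\ \forall M\in\mathcal{M}\}$. A closed convex cone $\mathcal{S}\subseteq\mathbb{S}^n_+$ is rank-one generated (ROG) if $\mathcal{S}=\mathrm{conv}(\mathcal{S}\cap\{xx^\top:x\in\mathbb{R}^n\})$. *)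

From HB Require Import structures.
From mathcomp Require Import all_boot all_order all_algebra.
From mathcomp Require Import reals.
Set Implicit Arguments. Unset Strict Implicit. Unset Printing Implicit Defensive.
Import Order.TTheory GRing.Theory Num.Theory.
Local Open Scope ring_scope.

Section Defs.
Variables (R : realType) (n : nat).

Definition symmx (X : 'M[R]_n) : Prop := X^T = X.

Definition mxinner (A B : 'M[R]_n) : R := \tr (A *m B).

Definition psdmx (X : 'M[R]_n) : Prop :=
  symmx X /\ forall x : 'cV[R]_n, 0 <= (x^T *m X *m x) ord0 ord0.

Definition Scone (calM : 'M[R]_n -> Prop) (X : 'M[R]_n) : Prop :=
  psdmx X /\ forall M, calM M -> 0 <= mxinner M X.

Definition Tcone (calM : 'M[R]_n -> Prop) (X : 'M[R]_n) : Prop :=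
  psdmx X /\ forall M, calM M -> mxinner M X = 0.

(* rank-one matrices x x^T (x arbitrary, possibly 0) *)
Definition rank_one_psd (X : 'M[R]_n) : Prop :=
  exists x : 'cV[R]_n, X = x *m x^T.

Definition convex_hull (K : 'M[R]_n -> Prop) (X : 'M[R]_n) : Prop :=
  exists (k : nat) (lam : 'I_k -> R) (Y : 'I_k -> 'M[R]_n),
    (forall i, 0 <= lam i) /\ \sum_(i < k) lam i = 1 /\
    (forall i, K (Y i)) /\ X = \sum_(i < k) lam i *: Y i.

Definition ROG (S : 'M[R]_n -> Prop) : Prop :=
  forall X, S X <-> convex_hull (fun Y => S Y /\ rank_one_psd Y) X.

End Defs.

From HB Require Import structures.
From mathcomp Require Import all_boot all_order all_algebra.
From mathcomp Require Import reals ring lra.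
Import Order.TTheory GRing.Theory Num.Theory.
Local Open Scope ring_scope.
Set Implicit Arguments. Unset Strict Implicit. Unset Printing Implicit Defensive.

(* If S(M) is rank-one generated and X lies in T(M), the rank-one terms of a
   decomposition of X inside S(M) are nonnegative on each M and sum to zero
   on it, so they already lie in T(M).
   Conversely, write X in S(M) as u u^T + v v^T + (more rank-one terms).  The
   matrix D = [u v] P [u v]^T depends linearly on the three entries of the
   symmetric 2x2 matrix P, so two linear conditions leave a nonzero P whose D
   is orthogonal to both matrices of M.  Moving along
   X + t D keeps every inner product with M, and at the values of t where
   I + t P becomes singular the first two terms merge into a single rank-one
   term, so induction on the number of terms applies.  Either there is such a
   t on each side of 0, and X is a convex combination of the two points, or
   t D is negative semidefinite for one of them, so that -t D lies in T(M)
   and X = (X + t D) + (-t D) is split using that T(M) is rank-one generated. *)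

Lemma exists_nonzero_left_kernel (F : fieldType) (m k : nat) (A : 'M[F]_(m, k)) :
  (k < m)%N -> exists2 x : 'rV_m, x != 0 & x *m A = 0.
Proof.
move=> km; have : kermx A != 0.
  by rewrite kermx_eq0 /row_free neq_ltn (leq_ltn_trans (rank_leq_col A) km).
by case/rowV0Pn => x /sub_kermxP xA x0; exists x.
Qed.

Lemma convex_shift_comb (F : fieldType) (V : lmodType F) (x d : V) (t1 t2 : F) :
  t1 != t2 -> x = (t2 / (t2 - t1)) *: (x + t1 *: d) + (- t1 / (t2 - t1)) *: (x + t2 *: d).
Proof.
move=> t12; have t21 : t2 - t1 != 0 by rewrite subr_eq0 eq_sym.
rewrite !scalerDr !scalerA addrACA -!scalerDl.
have -> : t2 / (t2 - t1) + - t1 / (t2 - t1) = 1 by field.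
have -> : t2 / (t2 - t1) * t1 + - t1 / (t2 - t1) * t2 = 0 by field.
by rewrite scale1r scale0r addr0.
Qed.

Section BilinearForms.
Variables (R : realType) (n : nat).
Implicit Types (M X Y : 'M[R]_n) (x y u w : 'cV[R]_n).

Definition bilin M x y : R := (x^T *m M *m y) 0 0.

Lemma dotC x y : (x^T *m y) 0 0 = (y^T *m x) 0 0.
Proof. by rewrite -(trmxK (y^T *m x)) trmx_mul trmxK [in RHS]mxE. Qed.

Lemma bilin_outer u w x y : bilin (u *m w^T) x y = (x^T *m u) 0 0 * (w^T *m y) 0 0.
Proof. by rewrite /bilin !mulmxA -(mulmxA (x^T *m u)) mxE big_ord1. Qed.

Lemma bilinD M N x y : bilin (M + N) x y = bilin M x y + bilin N x y.
Proof. by rewrite /bilin mulmxDr mulmxDl [in LHS]mxE. Qed.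

Lemma bilinZ a M x y : bilin (a *: M) x y = a * bilin M x y.
Proof. by rewrite /bilin -scalemxAr -scalemxAl [in LHS]mxE. Qed.

Lemma bilinN M x y : bilin (- M) x y = - bilin M x y.
Proof. by rewrite -scaleN1r bilinZ mulN1r. Qed.

Lemma bilin0 x y : bilin 0 x y = 0.
Proof. by rewrite /bilin mulmx0 mul0mx [in LHS]mxE. Qed.

Lemma bilinDl M x1 x2 y : bilin M (x1 + x2) y = bilin M x1 y + bilin M x2 y.
Proof. by rewrite /bilin linearD /= !mulmxDl [in LHS]mxE. Qed.

Lemma bilinZl M a x y : bilin M (a *: x) y = a * bilin M x y.
Proof. by rewrite /bilin linearZ /= -!scalemxAl [in LHS]mxE. Qed.

Lemma bilinDr M x y1 y2 : bilin M x (y1 + y2) = bilin M x y1 + bilin M x y2.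
Proof. by rewrite /bilin mulmxDr [in LHS]mxE. Qed.

Lemma bilinZr M a x y : bilin M x (a *: y) = a * bilin M x y.
Proof. by rewrite /bilin -scalemxAr [in LHS]mxE. Qed.

Lemma bilinC M x y : symmx M -> bilin M x y = bilin M y x.
Proof. by move=> sM; rewrite /bilin -mulmxA dotC trmx_mul sM. Qed.

Lemma bilin_delta M (i j : 'I_n) : bilin M (delta_mx i 0) (delta_mx j 0) = M i j.
Proof. by rewrite /bilin trmx_delta -rowE -colE !mxE. Qed.

Lemma bilin_deltal M (k : 'I_n) x : bilin M (delta_mx k 0) x = (row k M *m x) 0 0.
Proof. by rewrite /bilin trmx_delta -rowE. Qed.

Lemma mxinner_outer M x y : mxinner M (x *m y^T) = bilin M y x.
Proof. by rewrite /mxinner /bilin mulmxA mxtrace_mulC mulmxA trace_mx11. Qed.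

Lemma mxinnerD M X Y : mxinner M (X + Y) = mxinner M X + mxinner M Y.
Proof. by rewrite /mxinner mulmxDr mxtraceD. Qed.

Lemma mxinnerZ M a X : mxinner M (a *: X) = a * mxinner M X.
Proof. by rewrite /mxinner -scalemxAr mxtraceZ. Qed.

Lemma mxinner0 M : mxinner M 0 = 0.
Proof. by rewrite /mxinner mulmx0 mxtrace0. Qed.

Lemma mxinner_sum M (I : Type) (r : seq I) (F : I -> 'M[R]_n) :
  mxinner M (\sum_(i <- r) F i) = \sum_(i <- r) mxinner M (F i).
Proof. exact: (big_morph _ (mxinnerD M) (mxinner0 M)). Qed.

End BilinearForms.

Section Psd.
Variables (R : realType) (n : nat).
Implicit Types (X Y : 'M[R]_n) (x y w : 'cV[R]_n).

Definition gram (s : seq 'cV[R]_n) : 'M[R]_n := \sum_(w <- s) w *m w^T.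

Lemma gram_nil : gram [::] = 0.
Proof. by rewrite /gram big_nil. Qed.

Lemma gram_cons w s : gram (w :: s) = w *m w^T + gram s.
Proof. by rewrite /gram big_cons. Qed.

Lemma gram_cat s1 s2 : gram (s1 ++ s2) = gram s1 + gram s2.
Proof. by rewrite /gram big_cat. Qed.

Lemma psd0 : psdmx (0 : 'M[R]_n).
Proof. by split=> [|x]; rewrite ?/symmx ?trmx0 // -/(bilin _ x x) bilin0. Qed.

Lemma psdD X Y : psdmx X -> psdmx Y -> psdmx (X + Y).
Proof.
move=> [sX pX] [sY pY]; split=> [|x]; first by rewrite /symmx linearD /= sX sY.
by rewrite -/(bilin _ x x) bilinD; exact: addr_ge0 (pX x) (pY x).
Qed.

Lemma psdZ a X : 0 <= a -> psdmx X -> psdmx (a *: X).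
Proof.
move=> a0 [sX pX]; split=> [|x]; first by rewrite /symmx linearZ /= sX.
by rewrite -/(bilin _ x x) bilinZ; exact: mulr_ge0 a0 (pX x).
Qed.

Lemma psd_outer w : psdmx (w *m w^T).
Proof.
split=> [|x]; first by rewrite /symmx trmx_mul trmxK.
by rewrite -/(bilin _ x x) bilin_outer dotC -expr2 sqr_ge0.
Qed.

Lemma scale_outer (a : R) w : (a *: w) *m (a *: w)^T = a ^+ 2 *: (w *m w^T).
Proof. by rewrite linearZ /= -scalemxAl -scalemxAr scalerA -expr2. Qed.

Lemma psd_gram s : psdmx (gram s).
Proof.
elim: s => [|w s IH]; first by rewrite gram_nil; exact: psd0.
by rewrite gram_cons; exact: psdD (psd_outer w) IH.
Qed.

Lemma bilin_shift X x y t : symmx X ->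
  bilin X (x + t *: y) (x + t *: y) =
  bilin X x x + 2 * t * bilin X y x + t ^+ 2 * bilin X y y.
Proof.
move=> sX; rewrite !bilinDl !bilinDr !bilinZl !bilinZr (bilinC x y sX); ring.
Qed.

Lemma psd_diag_ge0 X (k : 'I_n) : psdmx X -> 0 <= X k k.
Proof. by move=> [_ pX]; rewrite -bilin_delta; apply: pX. Qed.

Lemma psd_row0 X (k j : 'I_n) : psdmx X -> X k k = 0 -> X k j = 0.
Proof.
move=> [sX pX] Xkk0.
have ge0 t : 0 <= X j j + 2 * t * X k j.
  have := pX (delta_mx j 0 + t *: delta_mx k 0).
  by rewrite -/(bilin _ _ _) bilin_shift // !bilin_delta Xkk0 mulr0 addr0.
apply/eqP/negPn/negP => Xkj0.
have := ge0 (- (X j j + 1) / (2 * X k j)).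
have -> : X j j + 2 * (- (X j j + 1) / (2 * X k j)) * X k j = -1.
  by field; rewrite Xkj0.
lra.
Qed.

Lemma psd_schur X (k : 'I_n) : psdmx X -> 0 < X k k ->
  psdmx (X - (X k k)^-1 *: (col k X *m (col k X)^T)).
Proof.
move=> [sX pX] Xkk; split.
  by rewrite /symmx linearB /= linearZ /= trmx_mul trmxK sX.
move=> x; rewrite -/(bilin _ x x) bilinD bilinN bilinZ bilin_outer dotC.
have rowX : (col k X)^T = row k X by rewrite tr_col sX.
rewrite rowX -bilin_deltal; set b := bilin X (delta_mx k 0) x.
have := pX (x - (b / X k k) *: delta_mx k 0).
rewrite -/(bilin _ _ _) -scaleNr bilin_shift // bilin_delta -/b.
suff -> : bilin X x x + 2 * - (b / X k k) * b + (- (b / X k k)) ^+ 2 * X k k =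
          bilin X x x - (X k k)^-1 * (b * b) by [].
by field; rewrite gt_eqF.
Qed.

Lemma schur_entry X (k i j : 'I_n) :
  (X - (X k k)^-1 *: (col k X *m (col k X)^T)) i j = X i j - (X k k)^-1 * (X i k * X j k).
Proof. by rewrite !mxE big_ord1 !mxE. Qed.

Lemma psd_gram_decomposition X : psdmx X -> exists s, X = gram s.
Proof.
suff rows_vanish m : forall X, psdmx X ->
    (forall i j : 'I_n, (m <= i)%N -> X i j = 0) -> exists s, X = gram s.
  by move=> pX; apply: (rows_vanish n) => // i j; rewrite leqNgt ltn_ord.
elim: m => [|m IH] {}X pX X0.
  by exists [::]; apply/matrixP => i j; rewrite gram_nil mxE X0.
have [mn|nm] := ltnP m n; last first.
  apply: IH => // i j mi.
  by have := leq_trans (ltn_ord i) (leq_trans nm mi); rewrite ltnn.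
pose k := Ordinal mn.
have X0' (i j : 'I_n) : (m <= i)%N -> i != k -> X i j = 0.
  by move=> mi ik; apply: X0; rewrite ltn_neqAle eq_sym mi andbT.
have [Xkk0|Xkk] := eqVneq (X k k) 0.
  apply: IH => // i j mi; have [->|] := eqVneq i k; last exact: X0'.
  exact: psd_row0.
have {}Xkk : 0 < X k k by rewrite lt_neqAle eq_sym Xkk psd_diag_ge0.
have [sX _] := pX.
have XC j : X j k = X k j by rewrite -[in LHS]sX mxE.
have [s Xs] : exists s, X - (X k k)^-1 *: (col k X *m (col k X)^T) = gram s.
  apply: IH => [|i j mi]; first exact: psd_schur.
  rewrite schur_entry; have [->|ik] := eqVneq i k.
    by rewrite XC mulrA mulVf ?gt_eqF // mul1r subrr.
  by rewrite (X0' i j) ?(X0' i k) // mul0r mulr0 subr0.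
exists ((Num.sqrt (X k k))^-1 *: col k X :: s).
rewrite gram_cons -Xs linearZ /= -scalemxAl -scalemxAr scalerA -expr2.
by rewrite exprVn sqr_sqrtr ?ltW // addrC subrK.
Qed.

End Psd.

Definition rank_one_sum (R : realType) (n : nat) (K : 'M[R]_n -> Prop) (X : 'M[R]_n) :=
  exists2 s, X = gram s & forall w, w \in s -> K (w *m w^T).

Section ConvexCone.
Variables (R : realType) (n : nat) (K : 'M[R]_n -> Prop).
Hypotheses (K0 : K 0) (KD : forall X Y, K X -> K Y -> K (X + Y))
  (KZ : forall a X, 0 <= a -> K X -> K (a *: X)).
Implicit Types (X Y : 'M[R]_n) (w : 'cV[R]_n).

Lemma rank_one_sum0 : rank_one_sum K 0.
Proof. by exists [::]; rewrite ?gram_nil. Qed.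

Lemma rank_one_sumD X Y : rank_one_sum K X -> rank_one_sum K Y -> rank_one_sum K (X + Y).
Proof.
move=> [s -> Ks] [t -> Kt]; exists (s ++ t); first by rewrite gram_cat.
by move=> w; rewrite mem_cat => /orP[/Ks|/Kt].
Qed.

Lemma rank_one_sumZ a X : 0 <= a -> rank_one_sum K X -> rank_one_sum K (a *: X).
Proof.
move=> a0 [s -> Ks]; exists [seq Num.sqrt a *: w | w <- s].
  rewrite /gram big_map scaler_sumr; apply: eq_bigr => w _.
  by rewrite scale_outer sqr_sqrtr.
by move=> _ /mapP[w ws ->]; rewrite scale_outer sqr_sqrtr //; exact/KZ/Ks.
Qed.

Lemma rank_one_sum_hull X :
  convex_hull (fun Y => K Y /\ rank_one_psd Y) X -> rank_one_sum K X.
Proof.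
move=> [k [lam [Y [lam0 [_ [KY ->]]]]]].
apply: (big_ind (rank_one_sum K)); [exact: rank_one_sum0 | exact: rank_one_sumD |].
move=> i _; apply: rank_one_sumZ => //; have [KYi [y Yi]] := KY i.
exists [:: y]; first by rewrite gram_cons gram_nil addr0.
by move=> w; rewrite inE => /eqP ->; rewrite -Yi.
Qed.

Lemma hull_rank_one_sum X :
  rank_one_sum K X -> convex_hull (fun Y => K Y /\ rank_one_psd Y) X.
Proof.
move=> [[|w0 s0] -> Ks].
  exists 1%N, (fun _ => 1), (fun _ => 0); rewrite !big_ord1 scaler0 gram_nil.
  by do !split=> //; exists 0; rewrite mul0mx.
set s := w0 :: s0; have s_gt0 : (size s)%:R != 0 :> R by rewrite pnatr_eq0.
exists (size s), (fun _ => (size s)%:R^-1),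
  (fun i : 'I_(size s) => (size s)%:R *: (s`_i *m (s`_i)^T)).
split; first by move=> i; rewrite invr_ge0 ler0n.
split; first by rewrite sumr_const card_ord -[_ *+ size s]mulr_natr mulVf.
split=> [i|]; first split.
- by apply: KZ; [exact: ler0n | exact/Ks/mem_nth].
- by exists (Num.sqrt (size s)%:R *: s`_i); rewrite scale_outer sqr_sqrtr ?ler0n.
- rewrite /gram (big_nth 0) big_mkord; apply: eq_bigr => i _.
  by rewrite scalerA mulVf // scale1r.
Qed.

Lemma hull_closed X : convex_hull (fun Y => K Y /\ rank_one_psd Y) X -> K X.
Proof.
move=> [k [lam [Y [lam0 [_ [KY ->]]]]]].
by apply: (big_ind K) => // i _; apply: KZ => //; case: (KY i).
Qed.

Lemma ROG_rank_one_sumP : ROG K <-> forall X, K X -> rank_one_sum K X.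
Proof.
split=> [ROGK X /ROGK|sumK X]; first exact: rank_one_sum_hull.
by split=> [/sumK|]; [exact: hull_rank_one_sum | exact: hull_closed].
Qed.

End ConvexCone.

Lemma rank_one_sum_sub (R : realType) (n : nat) (K K' : 'M[R]_n -> Prop) X :
  (forall Y, K Y -> K' Y) -> rank_one_sum K X -> rank_one_sum K' X.
Proof. by move=> KK' [s -> Ks]; exists s => // w /Ks /KK'. Qed.

Section Cones.
Variables (R : realType) (n : nat) (calM : 'M[R]_n -> Prop).
Implicit Types (X Y : 'M[R]_n).

Lemma Scone0 : Scone calM 0.
Proof. by split=> [|M _]; [exact: psd0 | rewrite mxinner0]. Qed.

Lemma SconeD X Y : Scone calM X -> Scone calM Y -> Scone calM (X + Y).
Proof.
move=> [pX SX] [pY SY]; split=> [|M hM]; first exact: psdD.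
by rewrite mxinnerD addr_ge0 ?SX ?SY.
Qed.

Lemma SconeZ a X : 0 <= a -> Scone calM X -> Scone calM (a *: X).
Proof.
move=> a0 [pX SX]; split=> [|M hM]; first exact: psdZ.
by rewrite mxinnerZ mulr_ge0 ?SX.
Qed.

Lemma Tcone0 : Tcone calM 0.
Proof. by split=> [|M _]; [exact: psd0 | rewrite mxinner0]. Qed.

Lemma TconeD X Y : Tcone calM X -> Tcone calM Y -> Tcone calM (X + Y).
Proof.
move=> [pX TX] [pY TY]; split=> [|M hM]; first exact: psdD.
by rewrite mxinnerD TX ?TY ?addr0.
Qed.

Lemma TconeZ a X : 0 <= a -> Tcone calM X -> Tcone calM (a *: X).
Proof.
move=> a0 [pX TX]; split=> [|M hM]; first exact: psdZ.
by rewrite mxinnerZ TX ?mulr0.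
Qed.

Lemma Tcone_Scone X : Tcone calM X -> Scone calM X.
Proof. by move=> [pX TX]; split=> // M /TX ->. Qed.

Lemma ROG_Tcone_of_Scone : ROG (Scone calM) -> ROG (Tcone calM).
Proof.
move/(ROG_rank_one_sumP Scone0 SconeD SconeZ) => Ssum.
apply/(ROG_rank_one_sumP Tcone0 TconeD TconeZ) => X TX.
have [s Xs Ss] := Ssum X (Tcone_Scone TX).
exists s => // w ws; split; first exact: psd_outer.
move=> M hM; have := TX.2 M hM; rewrite Xs mxinner_sum big_seq.
move/eqP; rewrite psumr_eq0 => [/allP/(_ w ws)/implyP/(_ ws)/eqP //|v vs].
by case: (Ss v vs) => _ /(_ M hM).
Qed.

End Cones.

Section Psd2x2.
Variable R : realType.
Implicit Types (a b c p q s t e : R).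

(* [psd2 a b c] and [rank1_psd2 a b c] say that the 2x2 matrix [[a, b], [b, c]]
   is positive semidefinite, resp. positive semidefinite and singular. *)
Definition psd2 a b c := [/\ 0 <= a, 0 <= c & b ^+ 2 <= a * c].
Definition rank1_psd2 a b c := [/\ 0 <= a, 0 <= c & a * c = b ^+ 2].

Definition singular_shift p q s t := rank1_psd2 (1 + t * p) (t * q) (1 + t * s).

Lemma singular_shiftN p q s t :
  singular_shift (- p) (- q) (- s) t = singular_shift p q s (- t).
Proof. by rewrite /singular_shift !mulrN !mulNr. Qed.

Lemma rank1_psd2_trace a b c : a * c = b ^+ 2 -> 0 <= a + c -> rank1_psd2 a b c.
Proof. by move=> det tr; split=> //; nra. Qed.

Lemma psd2Z k p q s : 0 <= k -> psd2 p q s -> psd2 (k * p) (k * q) (k * s).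
Proof. by move=> k0 [p0 s0 pqs]; split; nra. Qed.

(* [(p + s + e) / 2] is an eigenvalue of [[p, q], [q, s]], sent to 0 in
   [1 + t [[p, q], [q, s]]] by [t = -2 / (p + s + e)]; the sign condition on [e]
   makes the trace of the shift, hence its other eigenvalue, nonnegative. *)
Lemma singular_shift_eigen p q s e :
  e ^+ 2 = (p - s) ^+ 2 + 4 * q ^+ 2 -> p + s + e != 0 -> 0 <= e * (p + s + e) ->
  singular_shift p q s (-2 / (p + s + e)).
Proof.
set l := p + s + e => disc l0 el; apply: rank1_psd2_trace.
  apply/eqP; rewrite -subr_eq0.
  have -> : (1 + -2 / l * p) * (1 + -2 / l * s) - (-2 / l * q) ^+ 2 =
            (e ^+ 2 - (p - s) ^+ 2 - 4 * q ^+ 2) / l ^+ 2 by rewrite /l; field.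
  have -> : e ^+ 2 - (p - s) ^+ 2 - 4 * q ^+ 2 = 0 by rewrite disc; ring.
  by rewrite mul0r.
have -> : 1 + -2 / l * p + (1 + -2 / l * s) = 2 * (e * l) / l ^+ 2.
  by rewrite /l; field.
by apply: divr_ge0; [apply: mulr_ge0 | apply: sqr_ge0].
Qed.

Lemma psd2_eigen p q s r : 0 <= r -> r ^+ 2 = (p - s) ^+ 2 + 4 * q ^+ 2 ->
  0 <= p + s - r -> psd2 p q s.
Proof.
move=> r0 disc lm; have rsp : s - p <= r by nra.
have rps : p - s <= r by nra.
split; [lra | lra | nra].
Qed.

Lemma sqr_sqrt_discriminant p q s :
  Num.sqrt ((p - s) ^+ 2 + 4 * q ^+ 2) ^+ 2 = (p - s) ^+ 2 + 4 * q ^+ 2.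
Proof. by rewrite sqr_sqrtr // addr_ge0 ?sqr_ge0 // mulr_ge0 ?sqr_ge0. Qed.

Lemma singular_shift_cases_pos p q s :
  0 < p + s + Num.sqrt ((p - s) ^+ 2 + 4 * q ^+ 2) ->
  (exists t1 t2, [/\ t1 < 0, 0 < t2, singular_shift p q s t1 & singular_shift p q s t2])
  \/ exists t, singular_shift p q s t /\ psd2 (- t * p) (- t * q) (- t * s).
Proof.
set r := Num.sqrt _ => lp; have r0 : 0 <= r := sqrtr_ge0 _.
have disc : r ^+ 2 = _ := sqr_sqrt_discriminant p q s.
set t1 := -2 / (p + s + r).
have t1_lt0 : t1 < 0 by rewrite /t1 mulNr oppr_lt0 divr_gt0.
have sh1 : singular_shift p q s t1.
  by apply: singular_shift_eigen; rewrite ?gt_eqF ?mulr_ge0 // ltW.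
have [lm|lm] := ltP (p + s - r) 0.
  left; exists t1, (-2 / (p + s - r)); split=> //.
    by rewrite mulNr oppr_gt0 pmulr_rlt0 // invr_lt0.
  apply: singular_shift_eigen; rewrite ?sqrrN ?lt_eqF //; nra.
right; exists t1; split=> //; apply: psd2Z; first lra.
exact: psd2_eigen r0 disc lm.
Qed.

Lemma singular_shift_cases p q s : (p, q, s) != (0, 0, 0) ->
  (exists t1 t2, [/\ t1 < 0, 0 < t2, singular_shift p q s t1 & singular_shift p q s t2])
  \/ exists t, singular_shift p q s t /\ psd2 (- t * p) (- t * q) (- t * s).
Proof.
move=> nz; set r := Num.sqrt ((p - s) ^+ 2 + 4 * q ^+ 2).
have [lp|lp] := ltP 0 (p + s + r); first exact: singular_shift_cases_pos.
have lpN : 0 < - p + - s + Num.sqrt ((- p - - s) ^+ 2 + 4 * (- q) ^+ 2).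
  have -> : (- p - - s) ^+ 2 + 4 * (- q) ^+ 2 = (p - s) ^+ 2 + 4 * q ^+ 2 by ring.
  rewrite -/r ltNge; apply: contra nz => lpN.
  have r0 : 0 <= r := sqrtr_ge0 _.
  have disc : r ^+ 2 = _ := sqr_sqrt_discriminant p q s.
  have r_eq0 : r = 0 by lra.
  move: disc; rewrite r_eq0 expr0n /= => /esym disc.
  have q0 : q = 0 by nra.
  have p0 : p = 0 by nra.
  have s0 : s = 0 by lra.
  by rewrite p0 q0 s0.
case: (singular_shift_cases_pos lpN) => [[t1 [t2 [t1_lt0 t2_gt0]]]|[t []]].
  rewrite !singular_shiftN => sh1 sh2.
  by left; exists (- t2), (- t1); split=> //; rewrite ?oppr_lt0 ?oppr_gt0.
rewrite singular_shiftN => sh; rewrite !mulrNN => tpsd.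
by right; exists (- t); rewrite !mulNr !opprK.
Qed.

End Psd2x2.

Section Quad2.
Variables (R : realType) (n : nat).
Implicit Types (M : 'M[R]_n) (u v w x : 'cV[R]_n) (a b c : R).

(* The matrix [u v] [[a, b], [b, c]] [u v]^T. *)
Definition quad2 u v a b c : 'M[R]_n :=
  a *: (u *m u^T) + b *: (u *m v^T + v *m u^T) + c *: (v *m v^T).

Lemma quad2_entry u v a b c i j : quad2 u v a b c i j =
  a * (u i 0 * u j 0) + b * (u i 0 * v j 0 + v i 0 * u j 0) + c * (v i 0 * v j 0).
Proof. by rewrite !mxE !big_ord1 !mxE. Qed.

Lemma mxinner_quad2 M u v a b c : mxinner M (quad2 u v a b c) =
  a * bilin M u u + b * (bilin M v u + bilin M u v) + c * bilin M v v.
Proof. by rewrite !mxinnerD !mxinnerZ mxinnerD !mxinner_outer. Qed.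

Lemma scale_quad2 k u v a b c :
  k *: quad2 u v a b c = quad2 u v (k * a) (k * b) (k * c).
Proof. by rewrite /quad2 !scalerDr !scalerA. Qed.

Lemma quad2_psd u v a b c : psd2 a b c -> psdmx (quad2 u v a b c).
Proof.
move=> [a0 c0 bac]; split.
  by rewrite /symmx !linearD /= !linearZ /= !trmx_mul !trmxK -scalerDr [v *m u^T + _]addrC.
move=> x; rewrite -/(bilin _ x x) !bilinD !bilinZ !bilinD !bilin_outer.
rewrite [(u^T *m x) 0 0]dotC [(v^T *m x) 0 0]dotC.
set al := (x^T *m u) 0 0; set be := (x^T *m v) 0 0.
have [ac0|ac_gt0] : a + c = 0 \/ 0 < a + c by lra.
  have b0 : b = 0 by nra.
  have a_eq0 : a = 0 by lra.
  have c_eq0 : c = 0 by lra.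
  by rewrite a_eq0 b0 c_eq0 !mul0r !addr0.
(* (a + c) (a al^2 + 2 b al be + c be^2) is a sum of squares plus (a c - b^2) (al^2 + be^2). *)
have := sqr_ge0 (a * al + b * be); have := sqr_ge0 (b * al + c * be).
have : 0 <= (a * c - b ^+ 2) * (al ^+ 2 + be ^+ 2).
  by rewrite mulr_ge0 ?subr_ge0 ?addr_ge0 ?sqr_ge0.
nra.
Qed.

Lemma quad2_rank1 u v a b c : rank1_psd2 a b c -> exists w, quad2 u v a b c = w *m w^T.
Proof.
move=> [a0 c0 det]; have [a_eq0|a_neq0] := eqVneq a 0.
  have b0 : b = 0 by apply/eqP; rewrite -sqrf_eq0 -det a_eq0 mul0r.
  exists (Num.sqrt c *: v); apply/matrixP => i j.
  rewrite quad2_entry !mxE big_ord1 !mxE a_eq0 b0 -[c in LHS](sqr_sqrtr c0); ring.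
have a_gt0 : 0 < a by rewrite lt_neqAle eq_sym a_neq0.
have [r r_gt0 ra] : exists2 r, 0 < r & r ^+ 2 = a.
  by exists (Num.sqrt a); rewrite ?sqrtr_gt0 ?sqr_sqrtr // ltW.
have -> : c = b ^+ 2 / r ^+ 2 by rewrite ra -det mulrAC divff // mul1r.
exists (r *: u + (b / r) *: v); apply/matrixP => i j.
rewrite quad2_entry !mxE big_ord1 !mxE -ra; field; exact: lt0r_neq0.
Qed.

Lemma gram_shift_quad2 u v r p q s t :
  gram [:: u, v & r] + t *: quad2 u v p q s =
  quad2 u v (1 + t * p) (t * q) (1 + t * s) + gram r.
Proof.
by apply/matrixP => i j; rewrite /quad2 !gram_cons !mxE !big_ord1 !mxE; ring.
Qed.

End Quad2.

Definition plane_annihilated (R : realType) (n : nat) (calM : 'M[R]_n -> Prop) :=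
  forall u v : 'cV[R]_n, exists p q s, (p, q, s) != (0, 0, 0) /\
    forall M, calM M -> mxinner M (quad2 u v p q s) = 0.

Lemma two_constraints_annihilator (R : realType) (n : nat) (calM : 'M[R]_n -> Prop)
    (M1 M2 : 'M[R]_n) :
  (forall M, calM M -> M = M1 \/ M = M2) -> plane_annihilated calM.
Proof.
move=> hM u v.
pose coef M (i : 'I_3) := [:: bilin M u u; bilin M v u + bilin M u v; bilin M v v]`_i.
pose A := \matrix_(i < 3, j < 2) coef (if j == 0 then M1 else M2) i.
have [x x0 xA] := exists_nonzero_left_kernel A (isT : (2 < 3)%N).
exists (x 0 0), (x 0 1), (x 0 2); split.
  apply: contraNneq x0 => -[p0 q0 s0]; apply/eqP/rowP => i; rewrite mxE.
  case: i => [[|[|[|//]]] ?]; [rewrite -p0 | rewrite -q0 | rewrite -s0];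
    by congr (x _ _); apply: val_inj.
have inner_col (j : 'I_2) :
    mxinner (if j == 0 then M1 else M2) (quad2 u v (x 0 0) (x 0 1) (x 0 2)) = 0.
  have := congr1 (fun B : 'M_(1, 2) => B 0 j) xA.
  rewrite /= !mxE !big_ord_recl big_ord0 !mxE /= => <-.
  rewrite mxinner_quad2 addr0 addrA.
  by congr (x 0 _ * _ + x 0 _ * _ + x 0 _ * _); apply: val_inj.
by move=> M /hM[->|->]; [exact: (inner_col 0) | exact: (inner_col 1)].
Qed.

Section PlaneAnnihilated.
Variables (R : realType) (n : nat) (calM : 'M[R]_n -> Prop).
Hypothesis annihilator : plane_annihilated calM.
Hypothesis Tcone_rank_one_sum : forall X, Tcone calM X -> rank_one_sum (Scone calM) X.

Lemma Scone_gram_rank_one_sum s :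
  Scone calM (gram s) -> rank_one_sum (Scone calM) (gram s).
Proof.
move: {2}(size s) (leqnn (size s)) => m; elim: m s => [|m IH] [|u [|v r]] //= size_s S_s;
  try by exists [::].
  exists [:: u] => // w; rewrite inE => /eqP ->.
  by move: S_s; rewrite gram_cons gram_nil addr0.
have [p [q [s [nz ann]]]] := annihilator u v.
set X := gram [:: u, v & r]; set D := quad2 u v p q s.
have reduce t : singular_shift p q s t -> rank_one_sum (Scone calM) (X + t *: D).
  case/(quad2_rank1 u v) => w Dw.
  rewrite /X /D gram_shift_quad2 Dw -gram_cons; apply: IH => //.
  split=> [|M hM]; first exact: psd_gram.
  rewrite gram_cons -Dw -gram_shift_quad2 mxinnerD mxinnerZ ann // mulr0 addr0.
  by case: S_s => _ /(_ M hM).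
have [[t1 [t2 [t1_lt0 t2_gt0 sh1 sh2]]]|[t [sh Dpsd]]] := singular_shift_cases nz.
  rewrite (convex_shift_comb X D (negbT (lt_eqF (lt_trans t1_lt0 t2_gt0)))).
  apply: rank_one_sumD; apply: (rank_one_sumZ (@SconeZ _ _ calM));
    by [exact: reduce | apply: divr_ge0; lra].
have -> : X = (X + t *: D) + (- t) *: D by rewrite scaleNr addrK.
apply: rank_one_sumD (reduce t sh) (Tcone_rank_one_sum _).
split=> [|M hM]; first by rewrite scale_quad2; exact: quad2_psd Dpsd.
by rewrite mxinnerZ ann ?mulr0.
Qed.

End PlaneAnnihilated.

Lemma ROG_Scone_of_Tcone (R : realType) (n : nat) (calM : 'M[R]_n -> Prop) :
  plane_annihilated calM -> ROG (Tcone calM) -> ROG (Scone calM).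
Proof.
move=> ann /(ROG_rank_one_sumP (Tcone0 _) (@TconeD _ _ _) (@TconeZ _ _ _)) Tsum.
apply/(ROG_rank_one_sumP (Scone0 _) (@SconeD _ _ _) (@SconeZ _ _ _)) => X SX.
have [s Xs] := psd_gram_decomposition SX.1; rewrite Xs in SX *.
apply: Scone_gram_rank_one_sum => // Y /Tsum; apply: rank_one_sum_sub; exact: Tcone_Scone.
Qed.

Theorem corollary2p29 (R : realType) (n : nat) (calM : 'M[R]_n -> Prop) :
  (forall M, calM M -> symmx M) ->
  (exists M1 M2 : 'M[R]_n, M1 <> M2 /\ (forall M, calM M <-> M = M1 \/ M = M2)) ->
  ROG (Scone calM) <-> ROG (Tcone calM).
Proof.
move=> _ [M1 [M2 [_ calME]]].
have ann := two_constraints_annihilator (fun M => (calME M).1).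
by split; [exact: ROG_Tcone_of_Scone | exact: ROG_Scone_of_Tcone].
Qed.
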